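(* Let $\mathbb F$ be any field, $n\ge k>1$, let $\mathcal K\subseteq M_{n\times k}(\mathbb F)$ be a linear variety such that $\det_{n,k}(X)=0$ for all $X\in\mathcal K$, and let $B^*\subseteq[n]\times[k]$ be a cobasis of $\mathcal M(\mathcal K)$. If there exist $1\le i'\le n$ and $1\le j'\le k$ such that $|B^*\cap(\{i'\}\times[k])|=l$ and $B^*\cap([n]\times\{j'\})=\varnothing$, then there exists a linear variety $\mathcal K'\subseteq M_{(n-1)\times(k-1)}(\mathbb F)$ with $\operatorname{codim}(\mathcal K')\le\operatorname{codim}(\mathcal K)-l$ such that $\det_{n-1,k-1}(X')=0$ for all $X'\in\mathcal K'$.
   Context: A linear variety is a nonempty set $\mathbf s+V$ with $V$ a linear subspace (uniquely determined); codimension = ambient dimension minus $\dim V$. Identify $M_{n\times k}(\mathbb F)$ with $\mathbb F^{[n]\times[k]}$. Matroid $\mathcal M(\mathcal K)$ of $\mathcal K=\mathbf s+V\subseteq\mathbb F^E$: matroid on $E$ with rank function $r(S)=\dim\operatorname{span}\{x_e|_V:e\in S\}$, $x_e$ coordinate functionals; cobasis = complement of a basis. Cullis' determinant: $\det_{n,k}(X)=\sum_{c}\operatorname{sgn}(c)\det(X[c|))$, sum over $k$-subsets $c=\{c(1)<\dots<c(k)\}$ of $[n]$, $X[c|)$ the submatrix of rows in $c$, $\operatorname{sgn}(c)=(-1)^{\sum_\alpha(c(\alpha)-\alpha)}$. *)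

From HB Require Import structures.
From mathcomp Require Import all_boot all_order all_algebra.
Set Implicit Arguments. Unset Strict Implicit. Unset Printing Implicit Defensive.
Import GRing.Theory.
Local Open Scope ring_scope.

Definition in_variety (F : fieldType) (n k : nat)
  (s : 'M[F]_(n, k)) (V : {vspace 'M[F]_(n, k)}) (X : 'M[F]_(n, k)) : Prop :=
  X - s \in V.

Definition codim (F : fieldType) (n k : nat) (V : {vspace 'M[F]_(n, k)}) : nat :=
  (n * k - \dim V)%N.

(* Matroid M(K) on E = [n] x [k]: S is independent iff the restricted
   coordinate functionals x_e|_V (e in S) are linearly independent,
   i.e. r(S) = |S|. *)
Definition mat_indep (F : fieldType) (n k : nat) (V : {vspace 'M[F]_(n, k)})
  (S : {set 'I_n * 'I_k}) : Prop :=
  forall c : 'I_n * 'I_k -> F,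
    (forall v, v \in V -> \sum_(e in S) c e * v e.1 e.2 = 0) ->
    forall e, e \in S -> c e = 0.

Definition mat_basis (F : fieldType) (n k : nat) (V : {vspace 'M[F]_(n, k)})
  (B : {set 'I_n * 'I_k}) : Prop :=
  mat_indep V B /\ forall e, e \notin B -> ~ mat_indep V (e |: B).

Definition mat_cobasis (F : fieldType) (n k : nat) (V : {vspace 'M[F]_(n, k)})
  (Bs : {set 'I_n * 'I_k}) : Prop :=
  exists B, mat_basis V B /\ Bs = ~: B.

(* k-subsets c = {c(1) < ... < c(k)} of [n] are encoded by strictly
   increasing maps c : 'I_k -> 'I_n (0-based indices; c(a) - a unchanged). *)
Definition incr_map (n k : nat) (c : {ffun 'I_k -> 'I_n}) : bool :=
  [forall a : 'I_k, forall b : 'I_k, (a < b)%N ==> (c a < c b)%N].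

Definition cullis_det (F : fieldType) (n k : nat) (X : 'M[F]_(n, k)) : F :=
  \sum_(c : {ffun 'I_k -> 'I_n} | incr_map c)
     (-1) ^+ (\sum_(a < k) (c a - a))%N * \det (rowsub c X).

From HB Require Import structures.
From mathcomp Require Import all_boot all_order all_algebra.
From mathcomp Require Import zify.
Set Implicit Arguments. Unset Strict Implicit. Unset Printing Implicit Defensive.
Import GRing.Theory.
Local Open Scope ring_scope.

(* As column [j'] lies in the basis [B] of M(K), its entries can be prescribed
   freely on [V]: moving [s] inside [K] we may assume that column [j'] of every
   matrix of [s + (V ∩ {column j' = 0})] is the unit vector at row [i'].
   Expanding Cullis' determinant along that column gives, up to sign, the
   Cullis determinant of the minor without row [i'] and column [j'], so these
   minors form a variety [K'] on which det_{n-1,k-1} vanishes.  Its dimension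
   is at least dim V - n minus the dimension of the matrices of [V] supported in
   row [i'] off column [j']; those are determined by their entries in [B],
   which number k - 1 - l. *)

Section IncreasingMaps.

Variables n k : nat.
Implicit Types c : {ffun 'I_k -> 'I_n}.

Lemma incr_map_ltn c : incr_map c -> forall a b : 'I_k, (c a < c b)%N = (a < b)%N.
Proof.
move=> /forallP hc a b; case: (ltngtP a b) => [ab|ba|/val_inj ->]; last by rewrite ltnn.
- by have /forallP/(_ b) := hc a; rewrite ab.
- have /forallP/(_ a) := hc b; rewrite ba /= => /ltnW.
  by rewrite leqNgt => /negbTE.
Qed.

Lemma incr_map_inj c : incr_map c -> injective c.
Proof.
move=> hc a b cab; apply: val_inj.
by case: (ltngtP a b) => // ab; move: ab; rewrite -(incr_map_ltn hc) cab ltnn.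
Qed.

Lemma incr_map_geq c : incr_map c -> forall a : 'I_k, (a <= c a)%N.
Proof.
move=> hc [a ha]; elim: a ha => // a IH ha.
have ha' : (a < k)%N by apply: ltnW.
by apply: leq_ltn_trans (IH ha') _; rewrite incr_map_ltn.
Qed.

End IncreasingMaps.

Lemma find_ord_upclosed m (p : pred 'I_m) :
  (forall x y : 'I_m, (x <= y)%N -> p x -> p y) ->
  forall b : 'I_m, p b = (find p (enum 'I_m) <= b)%N.
Proof.
move=> p_up b; case: (leqP (find p (enum 'I_m)) b) => hb.
  have hp : has p (enum 'I_m).
    by rewrite has_find; apply: leq_ltn_trans hb _; rewrite size_enum_ord.
  apply: p_up (nth_find b hp).
  by rewrite nth_enum_ord // (leq_ltn_trans hb).
by have := before_find b hb; rewrite nth_ord_enum.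
Qed.

Lemma find_ord_threshold m (p : pred 'I_m) (a : nat) :
  (a <= m)%N -> (forall b : 'I_m, p b = (a <= b)%N) -> find p (enum 'I_m) = a.
Proof.
move=> am hp.
have /find_ord_upclosed hf : forall x y : 'I_m, (x <= y)%N -> p x -> p y.
  by move=> x y xy; rewrite !hp => /leq_trans; apply.
have : (find p (enum 'I_m) <= m)%N by have := find_size p (enum 'I_m); rewrite size_enum_ord.
case: (ltngtP a (find p (enum 'I_m))) => // [af|fa] fm.
  by have := hf (Ordinal (leq_trans af fm)); rewrite hp /= leqnn leqNgt af.
by have := hf (Ordinal (leq_trans fa am)); rewrite hp /= leqnn leqNgt fa.
Qed.

Section Lift.

Variables (m : nat) (h : 'I_m).

Lemma ltn_lift2 (i j : 'I_m.-1) : (lift h i < lift h j)%N = (i < j)%N.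
Proof. by rewrite !ltnNge /= leq_bump2. Qed.

Lemma ltn_lift_pivot (i : 'I_m.-1) : (lift h i < h)%N = (i < h)%N.
Proof. by rewrite /= /bump; case: (leqP h i) => hi /=; lia. Qed.

Lemma ltn_pivot_lift (i : 'I_m.-1) : (h < lift h i)%N = (h <= i)%N.
Proof. by rewrite /= /bump; case: (leqP h i) => hi /=; lia. Qed.

End Lift.

Section InsertRow.

Variables (n' k' : nat) (i0 : 'I_n'.+1).
Implicit Types (c : {ffun 'I_k' -> 'I_n'}) (C : {ffun 'I_k'.+1 -> 'I_n'.+1}).

(* [ins_map c] inserts the row [i0] into [c], whose values index the other
   rows via [lift i0]; [i0] lands at position [ins_pos c].  [del_map] undoes
   this, the default [d] being reached only when [C a <> i0]. *)
Definition ins_pos c : 'I_k'.+1 :=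
  inord (find (fun b : 'I_k' => (i0 <= c b)%N) (enum 'I_k')).

Definition ins_map c : {ffun 'I_k'.+1 -> 'I_n'.+1} :=
  [ffun x => if unlift (ins_pos c) x is Some y then lift i0 (c y) else i0].

Definition del_map (d : 'I_n') C (a : 'I_k'.+1) : {ffun 'I_k' -> 'I_n'} :=
  [ffun y => odflt d (unlift i0 (C (lift a y)))].

Lemma ins_posE c : ins_pos c = find (fun b => i0 <= c b)%N (enum 'I_k') :> nat.
Proof. by rewrite inordK // ltnS; apply: leq_trans (find_size _ _) _; rewrite size_enum_ord. Qed.

Lemma ins_posP c : incr_map c -> forall b, (i0 <= c b)%N = (ins_pos c <= b)%N.
Proof.
move=> hc b; rewrite ins_posE.
apply: find_ord_upclosed => x y; rewrite leq_eqVlt => /orP [/eqP/val_inj -> //|xy].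
by move/leq_trans; apply; rewrite ltnW // incr_map_ltn.
Qed.

Lemma ins_map_lift c y : ins_map c (lift (ins_pos c) y) = lift i0 (c y).
Proof. by rewrite ffunE liftK. Qed.

Lemma ins_map_pos c : ins_map c (ins_pos c) = i0.
Proof. by rewrite ffunE unlift_none. Qed.

Lemma incr_ins_map c : incr_map (ins_map c) = incr_map c.
Proof.
apply/idP/idP => hc; apply/forallP => x; apply/forallP => y; apply/implyP => xy.
  by rewrite -(ltn_lift2 i0) -!ins_map_lift incr_map_ltn ?ltn_lift2.
have pos := ins_posP hc; set a := ins_pos c in pos *.
case: (unliftP a x) xy => [x' ->|->]; case: (unliftP a y) => [y' ->|->];
  rewrite ?ins_map_lift ?ins_map_pos ?ltnn //.
- by rewrite !ltn_lift2 incr_map_ltn.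
- by rewrite !ltn_lift_pivot ltnNge -pos -ltnNge.
- by rewrite !ltn_pivot_lift pos.
Qed.

Lemma del_map_ins d c : del_map d (ins_map c) (ins_pos c) = c.
Proof. by apply/ffunP => y; rewrite ffunE ins_map_lift liftK. Qed.

Lemma del_mapP d C a : incr_map C -> C a = i0 -> forall y,
  C (lift a y) = lift i0 (del_map d C a y) /\ (i0 <= del_map d C a y)%N = (a <= y)%N.
Proof.
move=> hC Ca y; rewrite ffunE; case: (unliftP i0 (C (lift a y))) => [z Cz|] /=.
  by rewrite -ltn_pivot_lift -Cz -Ca incr_map_ltn // ltn_pivot_lift.
by rewrite -Ca => /(incr_map_inj hC)/eqP; rewrite lift_eqF.
Qed.

Lemma ins_del d C a : incr_map C -> C a = i0 ->
  (ins_map (del_map d C a), ins_pos (del_map d C a)) = (C, a).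
Proof.
move=> hC Ca; have delP := del_mapP d hC Ca.
have pos : ins_pos (del_map d C a) = a.
  apply/val_inj; rewrite /= ins_posE.
  by apply: find_ord_threshold => [|b]; [rewrite -ltnS | rewrite (delP b).2].
congr (_, _) => //; apply/ffunP => x; rewrite ffunE pos.
by case: (unliftP a x) => [y ->|->]; rewrite ?liftK ?unlift_none -?(delP y).1.
Qed.

Lemma sum_ins_map c : incr_map c ->
  (\sum_(x < k'.+1) (ins_map c x - x) = i0 - ins_pos c + \sum_(y < k') (c y - y))%N.
Proof.
move=> hc; rewrite (bigD1_ord (ins_pos c)) //= ins_map_pos; congr (_ + _)%N.
by apply: eq_bigr => y _; rewrite ins_map_lift /= /bump (ins_posP hc) subnDl.
Qed.

End InsertRow.

(* Expanding [det (rowsub C X)] along the unit column [j0] keeps only the [C]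
   taking the value [i0], at some position [a]; removing [i0] from [C] is a
   bijection onto the increasing maps of the minor, and the sign exponents
   differ by [(i0 - a) + (a + j0)]. *)
Lemma cullis_det_unit_col (F : fieldType) n' k' (X : 'M[F]_(n'.+1, k'.+1))
    (i0 : 'I_n'.+1) (j0 : 'I_k'.+1) :
  'I_n' -> (forall i, X i j0 = (i == i0)%:R) ->
  cullis_det X = (-1) ^+ (i0 + j0) * cullis_det (row' i0 (col' j0 X)).
Proof.
move=> d Xj0; set Y := col' j0 X.
pose G (C : {ffun 'I_k'.+1 -> 'I_n'.+1}) (a : 'I_k'.+1) : F :=
  (-1) ^+ (\sum_(x < k'.+1) (C x - x)) *
  ((-1) ^+ (a + j0) * \det (rowsub (fun y => C (lift a y)) Y)).
have laplace : cullis_det X = \sum_(C | incr_map C) \sum_(a | C a == i0) G C a.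
  rewrite /cullis_det; apply: eq_bigr => C _.
  rewrite (expand_det_col _ j0) mulr_sumr [RHS]big_mkcond; apply: eq_bigr => a _.
  rewrite mxE Xj0 /cofactor /G.
  have -> : row' a (col' j0 (rowsub C X)) = rowsub (fun y => C (lift a y)) Y.
    by apply/matrixP => i j; rewrite !mxE.
  by case: eqP; rewrite ?mul1r ?mul0r ?mulr0.
rewrite laplace pair_big_dep /cullis_det mulr_sumr.
rewrite (reindex_onto (fun c => (ins_map i0 c, ins_pos i0 c))
                      (fun p => del_map i0 d p.1 p.2)) /=; last first.
  by case=> C a /andP [hC /eqP Ca]; apply: ins_del.
apply: eq_big => [c|c /andP [/andP [hc _] _]].
  by rewrite del_map_ins ins_map_pos incr_ins_map !eqxx !andbT.
have pos_le : (ins_pos i0 c <= i0)%N.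
  by have := incr_map_geq hc (ins_pos i0 c); rewrite ins_map_pos.
rewrite incr_ins_map in hc; rewrite /G sum_ins_map //.
have -> : rowsub (fun y => ins_map i0 c (lift (ins_pos i0 c) y)) Y =
          rowsub c (row' i0 Y).
  by apply/matrixP => i j; rewrite !mxE ins_map_lift.
by rewrite mulrA -exprD mulrA -exprD addnAC addnA subnK.
Qed.

Section Support.

Variables (F : fieldType) (n k : nat).
Implicit Types (S B : {set 'I_n * 'I_k}) (U V : {vspace 'M[F]_(n, k)}).

Definition supported S (M : 'M[F]_(n, k)) := forall i j, (i, j) \notin S -> M i j = 0.

Definition maskmx S (M : 'M[F]_(n, k)) : 'M[F]_(n, k) :=
  \matrix_(i, j) (if (i, j) \in S then M i j else 0).

Fact maskmx_is_linear S : linear (maskmx S).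
Proof. by move=> a A C; apply/matrixP => i j; rewrite !mxE; case: ifP; rewrite ?mulr0 ?addr0. Qed.

HB.instance Definition _ S :=
  GRing.isLinear.Build F 'M[F]_(n, k) 'M[F]_(n, k) _ (maskmx S) (maskmx_is_linear S).

Lemma dimv_supported U S : {in U, forall M, supported S M} -> (\dim U <= #|S|)%N.
Proof.
move=> suppU; set D := [seq delta_mx e.1 e.2 | e <- enum S] : seq 'M[F]_(n, k).
have sUD : (U <= <<D>>)%VS.
  apply/subvP => M /suppU suppM; rewrite [M]matrix_sum_delta.
  apply: memv_suml => i _; apply: memv_suml => j _.
  case: (boolP ((i, j) \in S)) => [ijS|/suppM ->]; last by rewrite scale0r mem0v.
  by apply/memvZ/memv_span/mapP; exists (i, j); rewrite ?mem_enum.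
by rewrite (leq_trans (dimvS sUD)) // (leq_trans (dim_span D)) // size_map cardE.
Qed.

Lemma mat_basis_eq0 V B v : mat_basis V B -> v \in V ->
  {in B, forall e, v e.1 e.2 = 0} -> v = 0.
Proof.
move=> [indepB maxB] vV vB; apply/matrixP => i j; rewrite mxE.
apply/eqP/negP => /negP vij; have ijB : (i, j) \notin B by apply: contra vij => /vB ->.
apply: (maxB _ ijB) => c hc.
have cij : c (i, j) = 0.
  have := hc v vV; rewrite big_setU1 //= big1 => [|e /vB ->]; last by rewrite mulr0.
  by rewrite addr0 => /eqP; rewrite mulf_eq0 (negbTE vij) orbF => /eqP.
have cB : {in B, forall e, c e = 0}.
  by apply: indepB => w wV; have := hc w wV; rewrite big_setU1 //= cij mul0r add0r.
by move=> e; rewrite in_setU1 => /predU1P [->|/cB].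
Qed.

(* Restricting to [S :&: B] is injective on such a [U], since elements of [V]
   vanishing on the basis [B] are zero. *)
Lemma dimv_supported_basis V B U S : mat_basis V B -> (U <= V)%VS ->
  {in U, forall M, supported S M} -> (\dim U <= #|S :&: B|)%N.
Proof.
move=> basisB sUV suppU; pose f := linfun (maskmx (S :&: B)).
have inj : (U :&: lker f)%VS = 0%VS.
  apply/eqP; rewrite -subv0; apply/subvP => u; rewrite memv_cap memv_ker memv0 lfunE /=.
  case/andP => uU /eqP fu; apply/eqP/(mat_basis_eq0 basisB (subvP sUV _ uU)) => -[i j] ijB /=.
  case: (boolP ((i, j) \in S)) => [ijS|/(suppU _ uU) //].
  by have /matrixP/(_ i j) := fu; rewrite !mxE inE ijS ijB.
rewrite -(limg_dim_eq inj); apply: dimv_supported => _ /memv_imgP [u _ ->] i j ij.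
by rewrite lfunE /= mxE (negbTE ij).
Qed.

(* The coordinates in an independent set [S] can be prescribed on [V]: the
   matrix [M] of these coordinates of a basis of [V] has full row rank, since a
   vector in the left kernel of [M^T] is a linear relation between them. *)
Lemma mat_indep_coords V S : mat_indep V S ->
  forall t : 'I_n * 'I_k -> F, exists2 v, v \in V & {in S, forall e, v e.1 e.2 = t e}.
Proof.
move=> indepS t; set b := vbasis V.
pose M := \matrix_(r < \dim V, s < #|S|) b`_r (enum_val s).1 (enum_val s).2.
have relM (u : 'rV_#|S|) : u *m M^T = 0 -> u = 0.
  move=> uM; pose c e := \sum_(s | enum_val s == e) u 0 s.
  have rel v : v \in V -> \sum_(s < #|S|) u 0 s * v (enum_val s).1 (enum_val s).2 = 0.
    move=> vV; rewrite (coord_vbasis vV); under eq_bigr do rewrite summxE mulr_sumr.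
    rewrite exchange_big big1 // => r _.
    transitivity (coord b r v * (u *m M^T) 0 r); last by rewrite uM mxE mulr0.
    by rewrite mxE mulr_sumr; apply: eq_bigr => s _; rewrite /M !mxE mulrCA.
  have cS : {in S, forall e, c e = 0}.
    apply: indepS => v /rel relv; rewrite -[RHS]relv.
    rewrite (partition_big enum_val (mem S)) => [|s _]; last exact: enum_valP.
    by apply: eq_bigr => e _; rewrite mulr_suml; apply: eq_bigr => s /eqP ->.
  apply/rowP => s; rewrite mxE -(cS _ (enum_valP s)) /c (big_pred1 s) // => s'.
  by rewrite (inj_eq enum_val_inj).
have /submxP [D tD] : (\row_s t (enum_val s) <= M)%MS.
  by rewrite submx_full //; have := inj_row_free relM; rewrite /row_free mxrank_tr.
exists (\sum_r D 0 r *: b`_r).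
  by apply: memv_suml => r _; rewrite memvZ // vbasis_mem // mem_nth // size_tuple.
move=> e eS; have /matrixP/(_ 0 (enum_rank_in eS e)) := tD.
rewrite !mxE enum_rankK_in // => ->; rewrite summxE.
by apply: eq_bigr => r _; rewrite /M !mxE enum_rankK_in.
Qed.

End Support.

Section Reduction.

Variables (F : fieldType) (n' k' : nat) (V : {vspace 'M[F]_(n'.+1, k'.+1)}).
Variables (B : {set 'I_n'.+1 * 'I_k'.+1}) (i' : 'I_n'.+1) (j' : 'I_k'.+1).
Hypothesis basisB : mat_basis V B.
Hypothesis col_in_B : forall i, (i, j') \in B.

Definition col_kernel := (V :&: lker (linfun (col j')))%VS.

Definition minor_lfun : 'Hom('M[F]_(n'.+1, k'.+1), 'M[F]_(n', k')) :=
  linfun (row' i' \o col' j').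

Definition reduced_space := (minor_lfun @: col_kernel)%VS.

Lemma col_kernelP w : w \in col_kernel -> w \in V /\ forall i, w i j' = 0.
Proof.
rewrite memv_cap memv_ker lfunE /= => /andP [wV /eqP w0]; split=> // i.
by have /matrixP/(_ i 0) := w0; rewrite !mxE.
Qed.

Lemma exists_unit_col (s : 'M[F]_(n'.+1, k'.+1)) :
  exists2 u, u \in V & forall i, (s + u) i j' = (i == i')%:R.
Proof.
have [u uV uB] := mat_indep_coords basisB.1 (fun e => (e.1 == i')%:R - s e.1 e.2).
by exists u => // i; rewrite mxE (uB (i, j')) ?col_in_B //= addrC subrK.
Qed.

Lemma reduced_variety_cullis_eq0 (s u : 'M[F]_(n'.+1, k'.+1)) :
  'I_n' -> (forall X, in_variety s V X -> cullis_det X = 0) ->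
  u \in V -> (forall i, (s + u) i j' = (i == i')%:R) ->
  forall X', in_variety (row' i' (col' j' (s + u))) reduced_space X' -> cullis_det X' = 0.
Proof.
move=> d hK uV unit_col X' /memv_imgP [w /col_kernelP [wV w0]].
rewrite lfunE /= => /(canRL (subrK _)) ->; set X := s + (u + w).
have X0 : cullis_det X = 0 by apply: hK; rewrite /in_variety addrC addKr rpredD.
have unit_colX i : X i j' = (i == i')%:R.
  by rewrite -unit_col !mxE w0 addr0.
have -> : row' i' (col' j' w) + row' i' (col' j' (s + u)) = row' i' (col' j' X).
  by apply/matrixP => i j; rewrite !mxE addrC -addrA.
apply/eqP; have /eqP := cullis_det_unit_col d unit_colX.
by rewrite X0 eq_sym mulf_eq0 signr_eq0.
Qed.

Definition row_rest := [set e : 'I_n'.+1 * 'I_k'.+1 | e.1 == i'] :\ (i', j').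

Lemma card_row_rest_basis : (#|row_rest :&: B| + #|~: B :&: [set e | e.1 == i']|).+1 = k'.+1.
Proof.
set R := [set e : 'I_n'.+1 * 'I_k'.+1 | e.1 == i'].
have cardR : #|R| = k'.+1.
  have -> : R = setX [set i'] setT by apply/setP => -[a b]; rewrite !inE andbT.
  by rewrite cardsX cards1 cardsT card_ord mul1n.
have i'j'_RB : (i', j') \in R :&: B by rewrite !inE col_in_B eqxx.
rewrite -[RHS]cardR -(cardsID B R) (cardsD1 (i', j') (R :&: B)) i'j'_RB.
by rewrite /row_rest setIDAC [R :\: B]setDE [R :&: ~: B]setIC add1n.
Qed.

Lemma codim_reduced_space : (codim reduced_space <= codim V - #|~: B :&: [set e | e.1 == i']|)%N.
Proof.
have dimV : (\dim V <= \dim col_kernel + n'.+1)%N.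
  rewrite -(limg_ker_dim (linfun (col j')) V) leq_add2l.
  by rewrite (leq_trans (dimvS (subvf _))) // dimvf /dim /= muln1.
have dimW := limg_ker_dim minor_lfun col_kernel.
have dimZ : (\dim (col_kernel :&: lker minor_lfun) <= #|row_rest :&: B|)%N.
  apply: dimv_supported_basis basisB _ _; first by rewrite (subv_trans (capvSl _ _)) ?capvSl.
  move=> z; rewrite memv_cap memv_ker lfunE /= => /andP [/col_kernelP [_ z0] /eqP minor0] i j.
  rewrite !inE xpair_eqE negb_and => /orP [/negPn/andP [_ /eqP ->] //|/negbTE ii'].
  case: (unliftP j' j) => [j1 ->|-> //]; case: (unliftP i' i) => [i1 ->|ei]; last first.
    by rewrite ei eqxx in ii'.
  by have /matrixP/(_ i1 j1) := minor0; rewrite !mxE.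
have dimV_le : (\dim V <= n'.+1 * k'.+1)%N by rewrite (leq_trans (dimvS (subvf V))) // dimvf.
have count (dV dW dZ dR t l : nat) : (dV <= dW + n'.+1 -> dZ + dR = dW -> dZ <= t ->
    (t + l).+1 = k'.+1 -> dV <= n'.+1 * k'.+1 -> n' * k' - dR <= n'.+1 * k'.+1 - dV - l)%N.
  by rewrite mulSn mulnS; lia.
exact: count dimV dimW dimZ card_row_rest_basis dimV_le.
Qed.

End Reduction.

Unset Implicit Arguments.

Theorem mainTheorem7 (F : fieldType) (n k : nat) (hk : (1 < k)%N) (hkn : (k <= n)%N)
  (s : 'M[F]_(n, k)) (V : {vspace 'M[F]_(n, k)})
  (hK : forall X, in_variety s V X -> cullis_det X = 0)
  (Bs : {set 'I_n * 'I_k}) (hB : mat_cobasis V Bs)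
  (l : nat) (i' : 'I_n) (j' : 'I_k)
  (hl : #|Bs :&: [set e | e.1 == i']| = l)
  (hj : Bs :&: [set e | e.2 == j'] = set0) :
  exists (s' : 'M[F]_(n.-1, k.-1)) (V' : {vspace 'M[F]_(n.-1, k.-1)}),
    (codim V' <= codim V - l)%N /\
    forall X', in_variety s' V' X' -> cullis_det X' = 0.
Proof.
case: hB => B [basisB ->] in hl hj.
have col_in_B i : (i, j') \in B.
  by apply/negPn; have /setP/(_ (i, j')) := hj; rewrite !inE eqxx andbT => ->.
have [n' en] : exists n', n = n'.+2 by exists n.-2; lia.
have [k' ek] : exists k', k = k'.+1 by exists k.-1; lia.
subst n k l.
have [u uV unit_col] := exists_unit_col i' basisB col_in_B s.
exists (row' i' (col' j' (s + u))), (reduced_space V i' j'); split.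
  exact: (codim_reduced_space i' basisB col_in_B).
exact: reduced_variety_cullis_eq0 ord0 hK uV unit_col.
Qed.
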